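(* Let $\mathcal{X}\subseteq\mathbb{R}^d$ be a nonempty compact convex set and let $f:\mathbb{R}^d\to\mathbb{R}$ be Lipschitz continuous and Clarke regular (for all $x,v$ the limit $f'(x;v)=\lim_{t\downarrow0}\frac{f(x+tv)-f(x)}{t}$ exists). Fix $\lambda>0$ and let $r(\lambda)\ge0$, where $r:(0,\infty)\to[0,\infty)$ is a function with $r(\lambda)\to0$ as $\lambda\to0$ such that $\nabla f_\lambda(x)\in\partial f(x)+B(0,r(\lambda))$ for all $x\in\mathcal{X}$, with $f_\lambda(x)=\mathbb{E}_{u\sim\mathcal{N}(0,I)}[f(x+\lambda u)]$. For $(x,y)\in\mathcal{X}\times\mathbb{R}^d$ define $$\hat{\mathcal{N}}_{\mathcal{X}}(x)=\{\eta\in\mathcal{N}_{\mathcal{X}}(x):\ \|\eta\|\le 2\|y\|\},\qquad H_1(x,y)=-\big(y+\hat{\mathcal{N}}_{\mathcal{X}}(x)\big),\qquad H_2(x,y)=-\big(y-\partial f(x)\big)+B(0,r(\lambda)).$$ Then $H_1$ and $H_2$ are Marchaud maps on $\mathcal{X}\times\mathbb{R}^d$.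
   Context: $\mathcal{N}_{\mathcal{X}}(x)$ is the normal cone of the convex set $\mathcal{X}$ at $x\in\mathcal{X}$; note $\hat{\mathcal{N}}_{\mathcal{X}}(x)$ depends on $y$ as well. $\partial f(x)$ is the Clarke subdifferential of $f$ at $x$ ($\overline{\mathrm{conv}}$ of limits of gradients $\nabla f(x_k)$ along sequences $x_k\to x$ of differentiability points). $B(0,\rho)$ is the closed ball of radius $\rho$ about $0$; set sums are Minkowski sums, so $-(y-\partial f(x))=\{-y+g: g\in\partial f(x)\}$. A set-valued map $H$ defined on pairs $(x,y)$ is Marchaud if: (a) each $H(x,y)$ is nonempty, convex and compact; (b) there is $K>0$ with $\sup_{z\in H(x,y)}\|z\|\le K(1+\|x\|+\|y\|)$ for all $(x,y)$; (c) it is upper semicontinuous in the sense that whenever $(x_n,y_n)\to(x,y)$, $z_n\in H(x_n,y_n)$ and $z_n\to z$, then $z\in H(x,y)$. *)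

From HB Require Import structures.
From mathcomp Require Import all_boot all_order all_algebra.
From mathcomp Require Import all_classical all_reals all_analysis.
Set Implicit Arguments. Unset Strict Implicit. Unset Printing Implicit Defensive.
Import Order.TTheory GRing.Theory Num.Theory.
Import numFieldNormedType.Exports.
Local Open Scope classical_set_scope.
Local Open Scope ring_scope.

Section Defs.
Variables (R : realType) (d : nat).
Local Notation V := 'rV[R]_d.

Definition dotv (u v : V) : R := \sum_(i < d) u 0 i * v 0 i.
Definition enorm (v : V) : R := Num.sqrt (dotv v v).

Definition eball0 (rho : R) : set V := [set v | enorm v <= rho].

Definition mink_sum (A B : set V) : set V := [set a + b | a in A & b in B].

Definition is_convex (C : set V) : Prop :=
  forall a b t, C a -> C b -> 0 <= t <= 1 -> C (t *: a + (1 - t) *: b).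

Definition normal_cone (X : set V) (x : V) : set V :=
  [set eta | forall z, X z -> dotv eta (z - x) <= 0].

Definition has_gradient (f : V -> R) (x g : V) : Prop :=
  forall eps : R, 0 < eps -> exists2 delta : R, 0 < delta &
    forall h : V, enorm h < delta ->
      `|f (x + h) - f x - dotv g h| <= eps * enorm h.

Definition limiting_gradients (f : V -> R) (x : V) : set V :=
  [set g | exists (xk gk : nat -> V),
     (forall k, has_gradient f (xk k) (gk k)) /\
     xk @ \oo --> x /\ gk @ \oo --> g].

Definition closed_conv_hull (A : set V) : set V :=
  [set v | forall C : set V, closed C -> is_convex C -> A `<=` C -> C v].

Definition clarke_subdiff (f : V -> R) (x : V) : set V :=
  closed_conv_hull (limiting_gradients f x).

Definition marchaud (X : set V) (H : V -> V -> set V) : Prop :=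
  (forall x y, X x ->
     H x y !=set0 /\ is_convex (H x y) /\ compact (H x y)) /\
  (exists2 K : R, 0 < K &
     forall x y z, X x -> H x y z -> enorm z <= K * (1 + enorm x + enorm y)) /\
  (forall (xn yn zn : nat -> V) (x y z : V),
     (forall n, X (xn n)) -> X x ->
     xn @ \oo --> x -> yn @ \oo --> y ->
     (forall n, H (xn n) (yn n) (zn n)) -> zn @ \oo --> z ->
     H x y z).

End Defs.

(* Expectation of g(u) for u ~ N(0, I_d), as the iterated integral of g
   against the product of standard normal densities (coordinate by coordinate). *)
Fixpoint gauss_expect (R : realType) (d : nat) : ('rV[R]_d -> R) -> R :=
  match d return ('rV[R]_d -> R) -> R with
  | 0 => fun g => g 0
  | n.+1 => fun g =>
      \int[@lebesgue_measure R]_(t in setT)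
        (normal_pdf 0 1 t * gauss_expect (fun v : 'rV[R]_n => g (row_mx (\row_(_ < 1) t) v)))
  end.

Definition gauss_smooth (R : realType) (d : nat) (f : 'rV[R]_d -> R) (lam : R)
  (x : 'rV[R]_d) : R := gauss_expect (fun u => f (x + lam *: u)).

(* Values of H1 and H2 are convex, being affine images and Minkowski sums of
   convex sets, and they grow linearly: truncated normal vectors have norm at
   most 2|y| and, f being L-Lipschitz, its gradients, hence its limiting
   gradients and Clarke subgradients, have norm at most L.  Compactness of the
   values then follows from closedness of the graphs.  For H1 this is
   continuity of the inner product and of the norm.  For H2 the point is that
   the Clarke subdifferential has a closed graph: by compactness, gradients at
   points close to x lie close to any closed convex C containing the limiting
   gradients at x, so the subdifferential at nearby points lies in a closed
   convex thickening of C.  Nonemptiness of the Clarke subdifferential is taken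
   from the smoothing hypothesis, which puts the gradient of f_lam within
   r(lam) of it. *)

From HB Require Import structures.
From mathcomp Require Import all_boot all_order all_algebra.
From mathcomp Require Import all_classical all_reals all_analysis.
From mathcomp Require Import ring lra.
Set Implicit Arguments. Unset Strict Implicit. Unset Printing Implicit Defensive.
Import Order.TTheory GRing.Theory Num.Theory.
Import numFieldNormedType.Exports.
Local Open Scope classical_set_scope.
Local Open Scope ring_scope.

Section Euclidean.
Variables (R : realType) (d : nat).
Local Notation V := 'rV[R]_d.
Implicit Types (u v w : V) (t : R).

Lemma dotvC u v : dotv u v = dotv v u.
Proof. by apply: eq_bigr => i _; rewrite mulrC. Qed.

Lemma dotvDl u v w : dotv (u + v) w = dotv u w + dotv v w.
Proof. by rewrite /dotv -big_split; apply: eq_bigr => i _; rewrite mxE mulrDl. Qed.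

Lemma dotvZl t u v : dotv (t *: u) v = t * dotv u v.
Proof. by rewrite /dotv mulr_sumr; apply: eq_bigr => i _; rewrite mxE mulrA. Qed.

Lemma dotvNl u v : dotv (- u) v = - dotv u v.
Proof. by rewrite -scaleN1r dotvZl mulN1r. Qed.

Lemma dotvBl u v w : dotv (u - v) w = dotv u w - dotv v w.
Proof. by rewrite dotvDl dotvNl. Qed.

Lemma dotvDr u v w : dotv w (u + v) = dotv w u + dotv w v.
Proof. by rewrite dotvC dotvDl !(dotvC w). Qed.

Lemma dotvBr u v w : dotv w (u - v) = dotv w u - dotv w v.
Proof. by rewrite dotvC dotvBl !(dotvC w). Qed.

Lemma dotvZr t u v : dotv u (t *: v) = t * dotv u v.
Proof. by rewrite dotvC dotvZl dotvC. Qed.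

Lemma dotv0l v : dotv 0 v = 0.
Proof. by rewrite /dotv big1 // => i _; rewrite mxE mul0r. Qed.

Lemma dotvv_ge0 v : 0 <= dotv v v.
Proof. by apply: sumr_ge0 => i _; rewrite -expr2 sqr_ge0. Qed.

Lemma dotvv_eq0 v : (dotv v v == 0) = (v == 0).
Proof.
apply/idP/eqP => [/eqP /psumr_eq0P v0|->]; last by rewrite dotv0l.
apply/rowP => i; rewrite mxE; apply/eqP.
by rewrite -sqrf_eq0 expr2 v0 // => j _; rewrite -expr2 sqr_ge0.
Qed.

Lemma enorm_ge0 v : 0 <= enorm v.
Proof. exact: sqrtr_ge0. Qed.

Lemma enorm_sqr v : enorm v ^+ 2 = dotv v v.
Proof. exact/sqr_sqrtr/dotvv_ge0. Qed.

Lemma enorm_eq0 v : (enorm v == 0) = (v == 0).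
Proof. by rewrite sqrtr_eq0 le_eqVlt ltNge dotvv_ge0 orbF dotvv_eq0. Qed.

Lemma enorm0 : enorm (0 : V) = 0.
Proof. by apply/eqP; rewrite enorm_eq0. Qed.

Lemma enormZ t v : enorm (t *: v) = `|t| * enorm v.
Proof. by rewrite /enorm dotvZl dotvZr mulrA -expr2 sqrtrM ?sqr_ge0 // sqrtr_sqr. Qed.

Lemma enormN v : enorm (- v) = enorm v.
Proof. by rewrite -scaleN1r enormZ normrN1 mul1r. Qed.

Lemma enorm_distC u v : enorm (u - v) = enorm (v - u).
Proof. by rewrite -enormN opprB. Qed.

Lemma cauchy_schwarz u v : dotv u v <= enorm u * enorm v.
Proof.
have [->|v0] := eqVneq v 0; first by rewrite dotvC dotv0l enorm0 mulr0.
have vv_gt0 : 0 < dotv v v by rewrite lt_def dotvv_eq0 v0 dotvv_ge0.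
set a := dotv v v; set b := dotv u v; set c := dotv u u.
have := dotvv_ge0 (u - (b / a) *: v).
rewrite dotvBl !dotvBr !dotvZl !dotvZr (dotvC v u) -/a -/b -/c.
have -> : c - b / a * b - (b / a * b - b / a * (b / a * a)) = c - b ^+ 2 / a.
  by field; rewrite gt_eqF.
rewrite subr_ge0 ler_pdivrMr // => b2_le.
apply: le_trans (ler_norm b) _.
by rewrite -sqrtr_sqr -sqrtrM ?dotvv_ge0 // ler_sqrt ?mulr_ge0 ?dotvv_ge0.
Qed.

Lemma ler_enormD u v : enorm (u + v) <= enorm u + enorm v.
Proof.
rewrite -(ger0_norm (addr_ge0 (enorm_ge0 u) (enorm_ge0 v))) -sqrtr_sqr.
rewrite [enorm (u + v)]/enorm ler_sqrt ?sqr_ge0 //.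
rewrite dotvDl !dotvDr -!enorm_sqr (dotvC v u) sqrrD.
have := cauchy_schwarz u v; lra.
Qed.

Lemma ler_enorm_distD u v w : enorm (u - w) <= enorm (u - v) + enorm (v - w).
Proof. by rewrite -[u - w](subrKA v) ler_enormD. Qed.

Lemma coord_le_enorm v i : `|v 0 i| <= enorm v.
Proof.
rewrite -sqrtr_sqr ler_sqrt ?dotvv_ge0 // /dotv (bigD1 i) //= expr2 lerDl.
by apply: sumr_ge0 => j _; rewrite -expr2 sqr_ge0.
Qed.

Lemma enorm_convex t u v : 0 <= t <= 1 ->
  enorm (t *: u + (1 - t) *: v) <= t * enorm u + (1 - t) * enorm v.
Proof.
move=> /andP[t0 t1]; apply: le_trans (ler_enormD _ _) _.
by rewrite !enormZ !ger0_norm ?subr_ge0.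
Qed.

End Euclidean.

Section EuclideanTopology.
Variables (R : realType) (d : nat).
Local Notation V := 'rV[R]_d.
Implicit Types (u v a : V) (A B : set V).

Lemma mx_norm_le_enorm v : `|v| <= enorm v.
Proof.
rewrite [`|v|]mx_normrE; apply: bigmax_le => [|[i j] _ /=]; first exact: enorm_ge0.
by rewrite (ord1 i) coord_le_enorm.
Qed.

Lemma enorm_le_mx_norm v : enorm v <= (d%:R + 1) * `|v|.
Proof.
rewrite -[_ * _]ger0_norm ?mulr_ge0 ?addr_ge0 // -sqrtr_sqr ler_sqrt ?sqr_ge0 //.
apply: (@le_trans _ _ (\sum_(i < d) `|v| ^+ 2)).
  apply: ler_sum => i _; rewrite -expr2 -real_normK ?num_real // lerXn2r ?nnegrE //.
  by rewrite [`|v|]mx_normrE; apply/bigmax_geP; right; exists (0, i).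
rewrite sumr_const card_ord -[_ *+ d]mulr_natl exprMn.
apply: ler_wpM2r; first exact: sqr_ge0.
have := ler0n R d; nra.
Qed.

Lemma nbhs_enormP v B :
  nbhs v B <-> exists2 e : R, 0 < e & forall a, enorm (a - v) < e -> B a.
Proof.
have C_gt0 : 0 < d%:R + 1 :> R by rewrite ltr_wpDl.
split=> [/nbhs_ballP[e e0 vB]|[e e0 vB]].
  exists e => // a va; apply: vB; rewrite -ball_normE /= distrC.
  exact: le_lt_trans (mx_norm_le_enorm _) va.
apply/nbhs_ballP; exists (e / (d%:R + 1)); first exact: divr_gt0.
move=> a; rewrite -ball_normE /= distrC => va; apply: vB.
by apply: le_lt_trans (enorm_le_mx_norm _) _; rewrite mulrC -ltr_pdivlMr.
Qed.

Lemma nbhs_enorm v (e : R) : 0 < e -> nbhs v [set a | enorm (a - v) < e].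
Proof. by move=> e0; apply/nbhs_enormP; exists e. Qed.

Lemma cvg_enormP {T} (F : set_system T) {FF : Filter F} (u : T -> V) a :
  u @ F --> a <-> forall e : R, 0 < e -> \forall t \near F, enorm (u t - a) < e.
Proof.
split=> [ua e e0|ua B /nbhs_enormP[e e0 aB]]; first exact: ua (nbhs_enorm a e0).
by apply: filterS (ua e e0) => t /aB.
Qed.

Lemma closure_enormP A v :
  closure A v <-> forall e : R, 0 < e -> exists2 a, A a & enorm (a - v) < e.
Proof.
split=> [Av e e0|Av B /nbhs_enormP[e e0 vB]].
  by have [a [Aa va]] := Av _ (nbhs_enorm v e0); exists a.
by have [a Aa /vB Ba] := Av e e0; exists a.
Qed.

Lemma compact_cluster_seq A (u : nat -> V) : compact A -> (forall n, A (u n)) ->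
  exists2 h, A h & forall (e : R) (P : set nat), 0 < e -> (\forall n \near \oo, P n) ->
    exists2 n, P n & enorm (u n - h) < e.
Proof.
move=> cA Au; have uA : (u @ \oo) A by apply: (@filterE _ \oo).
have [h [Ah hu]] := cA _ _ uA.
exists h => // e P e0 FP.
have uP : (u @ \oo) [set u n | n in P] by apply: filterS FP => n Pn; exists n.
have [_ [[n Pn <-] uh]] := hu _ _ uP (nbhs_enorm h e0).
by exists n.
Qed.

Lemma bounded_set_enorm A (M : R) : (forall v, A v -> enorm v <= M) -> bounded_set A.
Proof.
move=> AM; exists M; split=> [|K MK v /AM vM]; first exact: num_real.
exact: le_trans (mx_norm_le_enorm _) (le_trans vM (ltW MK)).
Qed.

Lemma cvg_dotv {T} (F : set_system T) {FF : Filter F} (u v : T -> V) a b :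
  u @ F --> a -> v @ F --> b -> dotv (u t) (v t) @[t --> F] --> dotv a b.
Proof.
move=> ua vb; rewrite /dotv; apply: cvg_big => [|i _]; first exact: add_continuous.
have coord_cvg (w : T -> V) (c : V) : w @ F --> c -> (fun t => w t 0 i) @ F --> c 0 i.
  exact: (continuous_cvg _ (@coord_continuous R 1 d 0 i c)).
exact: cvgM (coord_cvg _ _ ua) (coord_cvg _ _ vb).
Qed.

Lemma enorm_continuous : continuous (@enorm R d).
Proof.
move=> v; apply: (@continuous_cvg _ _ _ (nbhs v) _ (fun w => dotv w w) _ (dotv v v)).
  exact: sqrt_continuous.
exact: (cvg_dotv (F := nbhs v) cvg_id cvg_id).
Qed.

End EuclideanTopology.

Lemma approx_seq (R : archiRealFieldType) (T : Type) (P : T -> Prop) (m : T -> R) :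
  (forall e, 0 < e -> exists2 t, P t & m t < e) ->
  exists2 u : nat -> T, (forall n, P (u n)) &
    forall e, 0 < e -> \forall n \near \oo, m (u n) < e.
Proof.
move=> Pm; have /choice[u Pu] : forall n : nat, exists t, P t /\ m t < n.+1%:R^-1.
  by move=> n; have [t Pt mt] := Pm n.+1%:R^-1 ltac:(by rewrite invr_gt0); exists t.
exists u => [n|e e0]; first by case: (Pu n).
near=> n; apply: lt_trans (proj2 (Pu n)) _.
by near: n; exact: (near_infty_natSinv_lt (PosNum e0)).
Unshelve. all: by end_near.
Qed.

Section ConvexSets.
Variables (R : realType) (d : nat).
Local Notation V := 'rV[R]_d.
Implicit Types (t e : R) (v a b c : V) (A B C : set V).

Lemma closed_seq_closed A :
  (forall (u : nat -> V) v, (forall n, A (u n)) -> u @ \oo --> v -> A v) -> closed A.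
Proof.
move=> Aseq v /closure_enormP /approx_seq[u Au uv]; apply: Aseq Au _.
exact/cvg_enormP.
Qed.

Lemma closed_eball0 e : closed (@eball0 R d e).
Proof.
change (closed (@enorm R d @^-1` [set x | x <= e])).
by apply: preimage_closed (closed_le (y := e)) => v _; exact: enorm_continuous.
Qed.

Lemma compact_eball0 e : compact (@eball0 R d e).
Proof.
apply: bounded_closed_compact; last exact: closed_eball0.
exact: (@bounded_set_enorm _ _ _ e).
Qed.

Lemma is_convex_eball0 e : is_convex (@eball0 R d e).
Proof.
move=> a b t /= ae be /[dup] t01 /andP[t0 t1].
apply: le_trans (enorm_convex _ _ t01) _.
have t1' : 0 <= 1 - t by rewrite subr_ge0.
have := ler_wpM2l t0 ae; have := ler_wpM2l t1' be; lra.
Qed.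

Lemma convex_comb_id t c : t *: c + (1 - t) *: c = c.
Proof. by rewrite -scalerDl addrC subrK scale1r. Qed.

Lemma is_convex_image (phi : V -> V) A :
  (forall a b t, phi (t *: a + (1 - t) *: b) = t *: phi a + (1 - t) *: phi b) ->
  is_convex A -> is_convex (phi @` A).
Proof.
move=> phi_conv cA _ _ t [a Aa <-] [b Ab <-] t01.
by exists (t *: a + (1 - t) *: b); [apply: cA | rewrite phi_conv].
Qed.

Lemma is_convex_setI A B : is_convex A -> is_convex B -> is_convex (A `&` B).
Proof. by move=> cA cB a b t [Aa Ba] [Ab Bb] t01; split; [apply: cA | apply: cB]. Qed.

Lemma is_convex_mink_sum A B : is_convex A -> is_convex B -> is_convex (mink_sum A B).
Proof.
move=> cA cB _ _ t [a1 Aa1 [b1 Bb1 <-]] [a2 Aa2 [b2 Bb2 <-]] t01.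
exists (t *: a1 + (1 - t) *: a2); first exact: cA.
by exists (t *: b1 + (1 - t) *: b2); [apply: cB | rewrite !scalerDr addrACA].
Qed.

Lemma is_convex_closed_conv_hull A : is_convex (closed_conv_hull A).
Proof.
by move=> a b t Aa Ab t01 K clK cvK AK; exact: cvK (Aa K clK cvK AK) (Ab K clK cvK AK) t01.
Qed.

Lemma is_convex_normal_cone (X : set V) x : is_convex (normal_cone X x).
Proof.
move=> a b t Na Nb /andP[t0 t1] w Xw; rewrite dotvDl !dotvZl.
have t1' : 0 <= 1 - t by rewrite subr_ge0.
by rewrite -[0]addr0 lerD // mulr_ge0_le0 // ?Na ?Nb.
Qed.

Definition thicken C e : set V :=
  [set v | forall eta, 0 < eta -> exists2 c, C c & enorm (v - c) < e + eta].

Lemma closed_thicken C e : closed (thicken C e).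
Proof.
move=> v /closure_enormP vC eta eta0.
have eta2 : 0 < eta / 2 by rewrite divr_gt0.
have [a Ca av] := vC _ eta2; have [c Cc ac] := Ca _ eta2.
exists c => //; apply: le_lt_trans (ler_enorm_distD v a c) _.
rewrite enorm_distC; lra.
Qed.

Lemma is_convex_thicken C e : is_convex C -> is_convex (thicken C e).
Proof.
move=> cC v1 v2 t C1 C2 /[dup] t01 /andP[t0 t1] eta eta0.
have eta2 : 0 < eta / 2 by rewrite divr_gt0.
have [c1 Cc1 vc1] := C1 _ eta2; have [c2 Cc2 vc2] := C2 _ eta2.
exists (t *: c1 + (1 - t) *: c2); first exact: cC.
rewrite opprD addrACA -!scalerBr; apply: le_lt_trans (enorm_convex _ _ t01) _.
have t1' : 0 <= 1 - t by rewrite subr_ge0.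
have := ler_wpM2l t0 (ltW vc1); have := ler_wpM2l t1' (ltW vc2); lra.
Qed.

End ConvexSets.

Lemma limiting_gradientsP (R : realType) (d : nat) (f : 'rV[R]_d -> R) x g :
  limiting_gradients f x g <-> forall e : R, 0 < e ->
    exists p q, [/\ has_gradient f p q, enorm (p - x) < e & enorm (q - g) < e].
Proof.
split=> [[xk [gk [fg [/cvg_enormP xkx /cvg_enormP gkg]]]] e e0|near_g].
  near \oo => n; exists (xk n), (gk n); split=> //; near: n; [exact: xkx | exact: gkg].
pose dist pq := Num.max (enorm (pq.1 - x)) (enorm (pq.2 - g)).
have /approx_seq[pq fpq pq_near] :
    forall e : R, 0 < e -> exists2 pq, has_gradient f pq.1 pq.2 & dist pq < e.
  move=> e e0; have [p [q [fpq px qg]]] := near_g e e0.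
  by exists (p, q); rewrite // /dist gt_max px qg.
exists (fst \o pq), (snd \o pq); split; first exact: fpq.
split; apply/cvg_enormP => e e0;
  by apply: filterS (pq_near e e0) => n; rewrite /dist gt_max => /andP[].
Unshelve. all: by end_near.
Qed.

Section LipschitzClarke.
Variables (R : realType) (d : nat) (f : 'rV[R]_d -> R) (L : R).
Local Notation V := 'rV[R]_d.
Implicit Types (x g p q : V) (C : set V).
Hypothesis L_ge0 : 0 <= L.
Hypothesis f_lip : forall x y, `|f x - f y| <= L * enorm (x - y).

Lemma has_gradient_enorm_le x g : has_gradient f x g -> enorm g <= L.
Proof.
move=> fg; have [->|g0] := eqVneq g 0; first by rewrite enorm0.
have g_gt0 : 0 < enorm g by rewrite lt_def enorm_eq0 g0 enorm_ge0.
apply/ler_addgt0Pr => e e0; have [del del0 fg_del] := fg e e0.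
pose t := del / (2 * enorm g).
have t0 : 0 < t by rewrite divr_gt0 // mulr_gt0.
have tg : t * enorm g = del / 2 by rewrite /t; field; rewrite gt_eqF.
have tg_lt : enorm (t *: g) < del by rewrite enormZ gtr0_norm // tg; lra.
have := fg_del _ tg_lt; have := f_lip (x + t *: g) x.
rewrite [x + _]addrC addrK dotvZr -enorm_sqr !enormZ (gtr0_norm t0) !ler_norml.
move=> /andP[_ lip] /andP[lo _].
have s0 : 0 < t * enorm g by rewrite mulr_gt0.
rewrite -(ler_pM2l s0); lra.
Qed.

Lemma limiting_gradients_enorm_le x g : limiting_gradients f x g -> enorm g <= L.
Proof.
move=> [xk [gk [fg [_ gkg]]]]; apply: (closed_cvg _ (@closed_eball0 R d L) _ g gkg).
by near=> n; exact: has_gradient_enorm_le (fg n).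
Unshelve. all: by end_near.
Qed.

Lemma clarke_subdiff_enorm_le x g : clarke_subdiff f x g -> enorm g <= L.
Proof.
move=> dg; apply: (dg _ (@closed_eball0 R d L) (@is_convex_eball0 R d L)) => h.
exact: limiting_gradients_enorm_le.
Qed.

Lemma gradients_near x C e : closed C -> limiting_gradients f x `<=` C -> 0 < e ->
  exists2 del : R, 0 < del & forall p q, has_gradient f p q -> enorm (p - x) < del ->
    exists2 c, C c & enorm (q - c) < e.
Proof.
move=> clC LC e0; apply: contrapT => no_del.
have /approx_seq[pq fpq pqx] : forall del : R, 0 < del -> exists2 pq : V * V,
    has_gradient f pq.1 pq.2 /\ (forall c, C c -> e <= enorm (pq.2 - c)) &
    enorm (pq.1 - x) < del.
  move=> del del0; apply: contrapT => no_pq; apply: no_del; exists del => // p q fpq px.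
  apply: contrapT => q_far; apply: no_pq; exists (p, q) => //; split=> // c Cc.
  by rewrite leNgt; apply/negP => qc; apply: q_far; exists c.
have [h _ pqh] := compact_cluster_seq (u := fun n => (pq n).2) (@compact_eball0 R d L)
  (fun n => has_gradient_enorm_le (fpq n).1).
have LGh : limiting_gradients f x h.
  apply/limiting_gradientsP => eps eps0.
  have [n pnx qnh] := pqh eps [set n | enorm ((pq n).1 - x) < eps] eps0 (pqx eps eps0).
  by exists (pq n).1, (pq n).2; split=> //; case: (fpq n).
have [n _ qnh] := pqh e setT e0 filterT.
by have := (fpq n).2 h (LC h LGh); rewrite leNgt qnh.
Qed.

Lemma clarke_subdiff_graph_closed x g :
  (forall e : R, 0 < e -> exists x' g',
     [/\ clarke_subdiff f x' g', enorm (x' - x) < e & enorm (g' - g) < e]) ->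
  clarke_subdiff f x g.
Proof.
move=> near_g C clC cvC LC; apply: (clC); apply/closure_enormP => e e0.
have e4 : 0 < e / 4 by rewrite divr_gt0.
have [del del0 grad_C] := gradients_near clC LC e4.
have m0 : 0 < Num.min (del / 2) (e / 4) by rewrite lt_min e4 divr_gt0.
have [x' [g' [dg' + +]]] := near_g _ m0; rewrite !lt_min => /andP[x'x _] /andP[_ g'g].
have LG_thick : limiting_gradients f x' `<=` thicken C (e / 4).
  move=> h /limiting_gradientsP near_h eta eta0.
  have m1 : 0 < Num.min (del / 2) eta by rewrite lt_min eta0 divr_gt0.
  have [p [q [fpq + +]]] := near_h _ m1; rewrite !lt_min => /andP[px' _] /andP[_ qh].
  have px : enorm (p - x) < del by have := ler_enorm_distD p x' x; lra.
  have [c Cc qc] := grad_C p q fpq px.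
  by exists c => //; have := ler_enorm_distD h q c; rewrite (enorm_distC h q); lra.
have [c Cc g'c] :=
  dg' _ (@closed_thicken R d C (e / 4)) (is_convex_thicken (e := e / 4) cvC) LG_thick _ e4.
by exists c => //; have := ler_enorm_distD c g' g; rewrite (enorm_distC c g'); lra.
Qed.

End LipschitzClarke.

Section Marchaud.
Variables (R : realType) (d : nat) (X : set 'rV[R]_d).
Local Notation V := 'rV[R]_d.
Implicit Types (x y : V) (H : V -> V -> set V).

Definition graph_closed H := forall (xn yn zn : nat -> V) (x y z : V),
  (forall n, X (xn n)) -> X x -> xn @ \oo --> x -> yn @ \oo --> y ->
  (forall n, H (xn n) (yn n) (zn n)) -> zn @ \oo --> z -> H x y z.

Lemma graph_closed_marchaud H (K : R) : 0 < K ->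
  (forall x y, X x -> H x y !=set0) -> (forall x y, X x -> is_convex (H x y)) ->
  (forall x y z, X x -> H x y z -> enorm z <= K * (1 + enorm x + enorm y)) ->
  graph_closed H -> marchaud X H.
Proof.
move=> K0 H_neq0 H_convex H_le H_closed; split; last by split; [exists K | exact: H_closed].
move=> x y Xx; split; [exact: H_neq0 | split; first exact: H_convex].
apply: bounded_closed_compact; first exact: bounded_set_enorm (fun z => H_le x y z Xx).
apply: closed_seq_closed => zn z Hzn znz.
by apply: (H_closed (fun=> x) (fun=> y) zn) => //; exact: cvg_cst.
Qed.

End Marchaud.

Section NormalConeMap.
Variables (R : realType) (d : nat) (X : set 'rV[R]_d).
Local Notation V := 'rV[R]_d.
Implicit Types x y : V.

Definition truncated_normal_cone x y : set V :=
  [set eta | normal_cone X x eta /\ enorm eta <= 2 * enorm y].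

Definition H1 x y : set V := [set - (y + eta) | eta in truncated_normal_cone x y].

Lemma H1_graph_closed : graph_closed X H1.
Proof.
move=> xn yn zn x y z _ _ xnx yny Hzn znz.
have eta_n n : truncated_normal_cone (xn n) (yn n) (- zn n - yn n).
  by have [eta ? <-] := Hzn n; rewrite opprK addrC addKr.
have eta_cvg : (fun n => - zn n - yn n) @ \oo --> - z - y by apply: cvgB => //; exact: cvgN.
exists (- z - y); last by rewrite addrC subrK opprK.
split.
  move=> w Xw; apply: (ler_cvg_to (cvg_dotv eta_cvg (cvgB (cvg_cst w) xnx)) (cvg_cst 0)).
  by near=> n; exact: (eta_n n).1 w Xw.
apply: (@ler_cvg_to _ \oo _ _ (fun n => enorm (- zn n - yn n)) (fun n => 2 * enorm (yn n))).
- exact: (continuous_cvg _ (@enorm_continuous R d _) eta_cvg).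
- exact: cvgM (cvg_cst _) (continuous_cvg _ (@enorm_continuous R d _) yny).
- by near=> n; exact: (eta_n n).2.
Unshelve. all: by end_near.
Qed.

Lemma H1_marchaud : marchaud X H1.
Proof.
apply: (graph_closed_marchaud (K := 3)) => // [x y _|x y _|x y _ _ [eta [_ eta_le] <-]|].
- exists (- (y + 0)), 0 => //; split; last by rewrite enorm0 mulr_ge0 ?enorm_ge0.
  by move=> w _; rewrite dotv0l.
- apply: is_convex_image; last first.
    exact: is_convex_setI (@is_convex_normal_cone R d X x) (@is_convex_eball0 R d _).
  by move=> a b t; rewrite !scalerN -opprD !scalerDr addrACA convex_comb_id.
- rewrite enormN; apply: le_trans (ler_enormD _ _) _.
  have := enorm_ge0 x; have := enorm_ge0 y; lra.
exact: H1_graph_closed.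
Qed.

End NormalConeMap.

Section ClarkeMap.
Variables (R : realType) (d : nat) (X : set 'rV[R]_d) (f : 'rV[R]_d -> R) (L rho : R).
Local Notation V := 'rV[R]_d.
Implicit Types x y z g : V.

Definition H2 x y : set V :=
  mink_sum [set - (y - g) | g in clarke_subdiff f x] (eball0 rho).

Lemma H2P x y z :
  H2 x y z <-> exists2 g, clarke_subdiff f x g & enorm (z + y - g) <= rho.
Proof.
split=> [[_ [g dg <-] [b b_le <-]]|[g dg zyg]].
  by exists g => //; rewrite opprB [_ + b + _]addrAC subrK [g + b]addrC addrK.
exists (- (y - g)); first by exists g.
by exists (z + y - g); rewrite // addrC opprB subrKA addrK.
Qed.

Hypothesis L_ge0 : 0 <= L.
Hypothesis f_lip : forall x y, `|f x - f y| <= L * enorm (x - y).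
Hypothesis rho_ge0 : 0 <= rho.
Hypothesis clarke_subdiff_neq0 : forall x, X x -> clarke_subdiff f x !=set0.

Lemma H2_graph_closed : graph_closed X H2.
Proof.
move=> xn yn zn x y z _ _ /cvg_enormP xnx yny Hzn znz.
have /cvg_enormP zyn : (fun n => zn n + yn n) @ \oo --> z + y by apply: cvgD.
have /choice[g gP] : forall n, exists g,
    clarke_subdiff f (xn n) g /\ enorm (zn n + yn n - g) <= rho.
  by move=> n; have /H2P[g] := Hzn n; exists g.
have [h _ gh] := compact_cluster_seq (u := g) (@compact_eball0 R d L)
  (fun n => clarke_subdiff_enorm_le L_ge0 f_lip (gP n).1).
apply/H2P; exists h.
  apply: (clarke_subdiff_graph_closed L_ge0 f_lip) => e e0.
  have [n xnx_n gn] := gh e _ e0 (xnx e e0).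
  by exists (xn n), (g n); split=> //; case: (gP n).
apply/ler_addgt0Pr => e e0; have e2 : 0 < e / 2 by rewrite divr_gt0.
have [n zy_n gn] := gh (e / 2) _ e2 (zyn (e / 2) e2).
have := ler_enorm_distD (z + y) (zn n + yn n) h; have := ler_enorm_distD (zn n + yn n) (g n) h.
have := (gP n).2; rewrite enorm_distC in zy_n; lra.
Qed.

Lemma H2_marchaud : marchaud X H2.
Proof.
apply: (graph_closed_marchaud (K := 1 + L + rho)); last exact: H2_graph_closed.
- by rewrite ltr_wpDr // ltr_wpDr // ltr01.
- move=> x y Xx; have [g dg] := clarke_subdiff_neq0 Xx.
  by exists (g - y); apply/H2P; exists g; rewrite // subrK subrr enorm0.
- move=> x y _; apply: is_convex_mink_sum; last exact: is_convex_eball0.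
  apply: is_convex_image; last exact: is_convex_closed_conv_hull.
  by move=> a b t; rewrite !scalerN -opprD !scalerBr addrACA -opprD convex_comb_id.
move=> x y z _ /H2P[g /(clarke_subdiff_enorm_le L_ge0 f_lip) g_le zyg].
have := ler_enorm_distD (z + y) g y; rewrite addrK.
have := ler_enormD g (- y); rewrite enormN.
have := mulr_ge0 (addr_ge0 L_ge0 rho_ge0) (enorm_ge0 x).
have := mulr_ge0 (addr_ge0 L_ge0 rho_ge0) (enorm_ge0 y).
have := enorm_ge0 x; have := enorm_ge0 y; lra.
Qed.

End ClarkeMap.

Theorem lemma2 (R : realType) (d : nat) (X : set 'rV[R]_d)
  (f : 'rV[R]_d -> R) (r : R -> R) (lam : R) :
  X !=set0 -> compact X -> is_convex X ->
  (exists L : R, forall x y, `|f x - f y| <= L * enorm (x - y)) ->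
  (forall x v : 'rV[R]_d, exists l : R,
      (fun t : R => (f (x + t *: v) - f x) / t) @ 0^'+ --> l) ->
  (forall l : R, 0 < l -> 0 <= r l) ->
  r @ 0^'+ --> 0 ->
  (forall l : R, 0 < l -> forall x, X x ->
      exists g, has_gradient (gauss_smooth f l) x g /\
                mink_sum (clarke_subdiff f x) (eball0 (r l)) g) ->
  0 < lam ->
  marchaud X (fun x y =>
    [set - (y + eta) | eta in [set eta | normal_cone X x eta /\ enorm eta <= 2 * enorm y]])
  /\
  marchaud X (fun x y =>
    mink_sum [set - (y - g) | g in clarke_subdiff f x] (eball0 (r lam))).
Proof.
move=> _ _ _ [L f_lip] _ r_ge0 _ smooth_grad lam_gt0.
have L_ge0 : 0 <= Num.max L 0 by rewrite le_max lexx orbT.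
have f_lip' x y : `|f x - f y| <= Num.max L 0 * enorm (x - y).
  by apply: le_trans (f_lip x y) _; rewrite ler_wpM2r ?enorm_ge0 // le_max lexx.
split; first exact: H1_marchaud.
apply: (H2_marchaud L_ge0 f_lip' (r_ge0 _ lam_gt0)) => x Xx.
by have [g [_ [a da _]]] := smooth_grad _ lam_gt0 _ Xx; exists a.
Qed.
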